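(* If $0\le\alpha\eta\le1$, then \[ \rho^{\mathrm{dir}}_{\alpha,\eta}\le\sqrt{(1-\alpha\eta)^2-2\alpha(1-\alpha\eta)c_\Phi+\alpha^2L_\Phi^2}, \] and equivalently \[ \rho^{\mathrm{dir}}_{\alpha,\eta}\le\sqrt{1-2\alpha(c_\Phi+\eta)+\alpha^2(L_\Phi^2+2c_\Phi\eta+\eta^2)}. \] Consequently, if $0\le\alpha\eta\le1$, $c_\Phi+\eta>0$, and \[ 0<\alpha<\frac{2(c_\Phi+\eta)}{L_\Phi^2+2c_\Phi\eta+\eta^2}, \] then $\rho^{\mathrm{dir}}_{\alpha,\eta}<1$.
   Context: Consider a finite discounted MDP with state space $\mathcal S=\{1,\dots,|\mathcal S|\}$, action space $\mathcal A=\{1,\dots,|\mathcal A|\}$, transition probabilities $P(s'\mid s,a)$, and discount factor $\gamma\in(0,1)$. State-action vectors are ordered as $(1,1),(2,1),\dots,(|\mathcal S|,1),(1,2),\dots$. The matrix $P\in\mathbb R^{|\mathcal S||\mathcal A|\times|\mathcal S|}$ has rows $P(\cdot\mid s,a)$. The set $\Theta$ is the finite set of deterministic stationary policies $\pi:\mathcal S\to\mathcal A$. For $\pi\in\Theta$, $\Pi^\pi\in\mathbb R^{|\mathcal S|\times|\mathcal S||\mathcal A|}$ has entry $1$ at row $s$, column $(s,\pi(s))$, and zeros elsewhere. The feature matrix $\Phi\in\mathbb R^{|\mathcal S||\mathcal A|\times m}$ has full column rank. The distribution $d>0$ on $\mathcal S\times\mathcal A$ gives $D=\mathrm{diag}(d)$.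 The step size is $\alpha\in(0,1)$ and the regularization weight is $\eta\ge0$. Let $M_\pi:=\Phi^\top D\Phi-\gamma\Phi^\top DP\Pi^\pi\Phi$. Define \[ c_\Phi:=\min_{\pi\in\Theta}\lambda_{\min}\big((M_\pi+M_\pi^\top)/2\big),\qquad L_\Phi:=\max_{\pi\in\Theta}\|M_\pi\|_2. \] For $\pi\in\Theta$, define $A^\eta_\pi:=I-\alpha(M_\pi+\eta I)$, and let $\rho^{\mathrm{dir}}_{\alpha,\eta}$ be the joint spectral radius $\lim_k\max_{\pi_i\in\Theta}\|A^\eta_{\pi_k}\cdots A^\eta_{\pi_1}\|^{1/k}$ of $\{A^\eta_\pi:\pi\in\Theta\}$. *)

From HB Require Import structures.
From mathcomp Require Import all_boot all_order all_algebra.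
From mathcomp Require Import all_classical all_reals all_analysis.
Set Implicit Arguments. Unset Strict Implicit. Unset Printing Implicit Defensive.
Import Order.TTheory GRing.Theory Num.Theory.
Local Open Scope classical_set_scope.
Local Open Scope ring_scope.

Section Defs.
Variable R : realType.

(* Index of the state-action pair (s,a) in the ordering
   (1,1),(2,1),...,(|S|,1),(1,2),... : zero-based value s + |S| * a. *)
Lemma sa_index_lt (nS nA : nat) (s : 'I_nS) (a : 'I_nA) : (s + nS * a < nS * nA)%N.
Proof.
have Ha := ltn_ord a; have Hs := ltn_ord s.
apply: (@leq_trans (nS * a.+1)); last by rewrite leq_mul2l Ha orbT.
by rewrite mulnS ltn_add2r.
Qed.

Definition sa_index (nS nA : nat) (s : 'I_nS) (a : 'I_nA) : 'I_(nS * nA) :=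
  Ordinal (sa_index_lt s a).

Definition policy (nS nA : nat) := {ffun 'I_nS -> 'I_nA}.

Definition PiMat (nS nA : nat) (pi : policy nS nA) : 'M[R]_(nS, nS * nA) :=
  \matrix_(s < nS, j < nS * nA) (if j == sa_index s (pi s) then 1 else 0).

Definition vnorm2 (q : nat) (x : 'cV[R]_q) : R := Num.sqrt (\sum_i x i 0 ^+ 2).

Definition opnorm2 (p q : nat) (A : 'M[R]_(p, q)) : R :=
  sup [set vnorm2 (A *m x) | x in [set x : 'cV[R]_q | vnorm2 x = 1]].

(* smallest eigenvalue (used for symmetric matrices, whose eigenvalues are real) *)
Definition lambda_min (n : nat) (S : 'M[R]_n) : R := inf [set a : R | eigenvalue S a].

Definition Mpi (nS nA m : nat) (Phi : 'M[R]_(nS * nA, m)) (d : 'cV[R]_(nS * nA))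
  (P : 'M[R]_(nS * nA, nS)) (gamma : R) (pi : policy nS nA) : 'M[R]_m :=
  Phi^T *m diag_mx d^T *m Phi - gamma *: (Phi^T *m diag_mx d^T *m P *m PiMat pi *m Phi).

Definition c_Phi (nS nA m : nat) (Phi : 'M[R]_(nS * nA, m)) (d : 'cV[R]_(nS * nA))
  (P : 'M[R]_(nS * nA, nS)) (gamma : R) : R :=
  inf [set lambda_min (2^-1 *: (Mpi Phi d P gamma pi + (Mpi Phi d P gamma pi)^T))
      | pi in [set: policy nS nA]].

Definition L_Phi (nS nA m : nat) (Phi : 'M[R]_(nS * nA, m)) (d : 'cV[R]_(nS * nA))
  (P : 'M[R]_(nS * nA, nS)) (gamma : R) : R :=
  sup [set opnorm2 (Mpi Phi d P gamma pi) | pi in [set: policy nS nA]].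

Definition Aeta (nS nA m : nat) (Phi : 'M[R]_(nS * nA, m)) (d : 'cV[R]_(nS * nA))
  (P : 'M[R]_(nS * nA, nS)) (gamma : R) (alpha eta : R) (pi : policy nS nA) : 'M[R]_m :=
  1%:M - alpha *: (Mpi Phi d P gamma pi + eta%:M).

Definition prodA (m : nat) (T : Type) (A : T -> 'M[R]_m) (s : seq T) : 'M[R]_m :=
  foldl (fun B pi => A pi *m B) 1%:M s.

Definition jsr (m : nat) (T : finType) (A : T -> 'M[R]_m) : R :=
  limn (fun k : nat =>
    powR (sup [set opnorm2 (prodA A (fgraph f)) | f in [set: {ffun 'I_k -> T}]])
         (k%:R^-1)).

Definition rho_dir (nS nA m : nat) (Phi : 'M[R]_(nS * nA, m)) (d : 'cV[R]_(nS * nA))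
  (P : 'M[R]_(nS * nA, nS)) (gamma : R) (alpha eta : R) : R :=
  jsr (Aeta Phi d P gamma alpha eta).

End Defs.

(* Each A^eta_pi y equals (1 - alpha eta) y - alpha M_pi y, whose squared norm
   expands as (1 - alpha eta)^2 |y|^2 - 2 alpha (1 - alpha eta) y^T M_pi y
   + alpha^2 |M_pi y|^2.  Since 1 - alpha eta >= 0, the cross term is bounded by
   the Rayleigh inequality y^T M_pi y >= c_Phi |y|^2 for the symmetric part of
   M_pi (spectral theorem), and the last term by |M_pi| <= L_Phi.  Hence all
   A^eta_pi contract by one common factor and every product of k of them by its
   k-th power, which bounds every term of the sequence defining the joint
   spectral radius, and so its limit.  The strict bound is the elementary
   1 - 2 alpha k + alpha^2 Q < 1 for 0 < alpha < 2k/Q. *)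

From HB Require Import structures.
From mathcomp Require Import all_boot all_order all_algebra.
From mathcomp Require Import all_classical all_reals all_analysis.
From mathcomp Require Import ring lra complex.
Import Order.TTheory GRing.Theory Num.Theory.
Local Open Scope classical_set_scope.
Local Open Scope ring_scope.
Set Implicit Arguments. Unset Strict Implicit. Unset Printing Implicit Defensive.

Lemma ler_term_sumr (R : numDomainType) (I : finType) (F : I -> R) i :
  (forall j, 0 <= F j) -> F i <= \sum_j F j.
Proof. by move=> F_ge0; rewrite (bigD1 i) //= lerDl sumr_ge0. Qed.

Section QuadraticForms.
Variables (R : realDomainType) (n : nat).
Implicit Types x y : 'cV[R]_n.

Lemma trmx_mul_selfE x : (x^T *m x) 0 0 = \sum_i x i 0 ^+ 2.
Proof. by rewrite mxE; apply: eq_bigr => i _; rewrite mxE expr2. Qed.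

Lemma trmx_mul_self_ge0 x : 0 <= (x^T *m x) 0 0.
Proof. by rewrite trmx_mul_selfE; apply: sumr_ge0 => i _; exact: sqr_ge0. Qed.

Lemma trmx_mul_self_eq0 x : ((x^T *m x) 0 0 == 0) = (x == 0).
Proof.
apply/idP/eqP => [|->]; last by rewrite mulmx0 mxE.
rewrite trmx_mul_selfE psumr_eq0 => [/allP x0|i _]; last exact: sqr_ge0.
apply/matrixP => i j; rewrite ord1 mxE.
by move: (x0 i (mem_index_enum i)); rewrite implyTb sqrf_eq0 => /eqP.
Qed.

Lemma trmx_mul_self_lincomb (b a : R) y z :
  ((b *: y - a *: z)^T *m (b *: y - a *: z)) 0 0 =
  b ^+ 2 * (y^T *m y) 0 0 - 2 * b * a * (y^T *m z) 0 0 + a ^+ 2 * (z^T *m z) 0 0.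
Proof.
rewrite !mxE !mulr_sumr -sumrB -!big_split /=; apply: eq_bigr => i _.
rewrite !mxE; ring.
Qed.

End QuadraticForms.

Section NormalSpectrum.
Local Open Scope sesquilinear_scope.
Variables (C : numClosedFieldType) (n : nat) (A : 'M[C]_n).
Hypothesis A_normal : A \is normalmx.

Let U := spectralmx A.
Let D := spectral_diag A.

Lemma spectral_diag_eigenvalue j : eigenvalue A (D 0 j).
Proof.
have Uunit : U \in unitmx := spectral_unit A.
have AE : A = invmx U *m diag_mx D *m U := orthomx_spectralP A_normal.
apply/eigenvalueP; exists (row j U).
  rewrite -row_mul AE !mulmxA mulmxV // mul1mx mul_diag_mx.
  by apply/rowP => k; rewrite !mxE.
apply/eqP => /(congr1 (fun v => (v *m invmx U) 0 j)).
by rewrite /= -row_mul mulmxV // mul0mx !mxE eqxx; apply/eqP; rewrite oner_eq0.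
Qed.

Lemma normalmx_quad_ge (l : C) (w : 'rV_n) : (forall j, l <= D 0 j) ->
  l * (w *m w^t*) 0 0 <= (w *m A *m w^t*) 0 0.
Proof.
move=> lD.
have Uu : U \is unitarymx := spectral_unitarymx A.
have AE : A = U^t* *m diag_mx D *m U.
  by rewrite -invmx_unitary //; exact: orthomx_spectralP.
set z := w *m U^t*.
have zE : z^t* = U *m w^t* by rewrite /z trmx_mul map_mxM trmxCK.
have -> : w *m w^t* = z *m z^t*.
  by rewrite zE /z mulmxA -(mulmxA w) -invmx_unitary // mulVmx ?mulmx1 // unitarymx_unit.
have -> : w *m A *m w^t* = z *m diag_mx D *m z^t* by rewrite zE AE /z !mulmxA.
clearbody z; rewrite mul_mx_diag !mxE mulr_sumr; apply: ler_sum => j _.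
rewrite !mxE mulrAC [l * _]mulrC; apply: ler_wpM2l; last exact: lD.
exact: mul_conjC_ge0.
Qed.

End NormalSpectrum.

Section RealSymmetric.
Local Open Scope sesquilinear_scope.
Variables (R : rcfType) (m : nat) (S : 'M[R]_m).
Hypothesis S_sym : S^T = S.
Local Notation toC := (real_complex R).

Lemma eigenvalue_map_complex a : eigenvalue (map_mx toC S) (toC a) = eigenvalue S a.
Proof. by rewrite !eigenvalue_root_char -map_char_poly fmorph_root. Qed.

Lemma symmx_spectral : exists2 d : 'I_m -> R, forall j, eigenvalue S (d j) &
  forall l (x : 'cV_m), (forall j, l <= d j) -> l * (x^T *m x) 0 0 <= (x^T *m S *m x) 0 0.
Proof.
have toC_real (a : R) : toC a \is Num.real by rewrite /real_complex_def complex_real.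
set Sc := map_mx toC S.
have Sc_herm : Sc \is hermsymmx.
  apply: realsym_hermsym; last by apply/mxOverP => i j; rewrite mxE toC_real.
  by apply/eqP; rewrite expr0 scale1r map_mx_id // /Sc map_trmx S_sym.
have Sc_normal := hermitian_normalmx Sc_herm.
set D := spectral_diag Sc.
have DE j : D 0 j = toC (complex.Re (D 0 j)).
  by rewrite RRe_real // (mxOverP (hermitian_spectral_diag_real Sc_herm)).
exists (fun j => complex.Re (D 0 j)) => [j|l x lD].
  by rewrite -eigenvalue_map_complex -DE; exact: spectral_diag_eigenvalue.
set w := (map_mx toC x)^T.
have wE : w^t* = map_mx toC x.
  by apply/matrixP => i k; rewrite !mxE conj_Creal // toC_real.
rewrite -lecR rmorphM /=.
have -> : toC ((x^T *m x) 0 0) = (w *m w^t*) 0 0.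
  by rewrite wE /w map_trmx -map_mxM [RHS]mxE.
have -> : toC ((x^T *m S *m x) 0 0) = (w *m Sc *m w^t*) 0 0.
  by rewrite wE /w map_trmx -!map_mxM [RHS]mxE.
by apply: normalmx_quad_ge => // j; rewrite DE lecR; exact: lD.
Qed.

Lemma symmx_eigenvalue_lbound : has_lbound [set a | eigenvalue S a].
Proof.
have [d _ d_quad] := symmx_spectral.
exists (- \sum_j `|d j|) => a /eigenvalueP [v vS v0].
(* a is the Rayleigh quotient of its eigenvector v, hence at least any l <= d. *)
have v2_gt0 : 0 < (v^T^T *m v^T) 0 0.
  by rewrite lt_def trmx_mul_self_ge0 trmx_mul_self_eq0 -trmx0 (inj_eq trmx_inj) v0.
rewrite -(ler_pM2r v2_gt0) [X in _ <= X](_ : _ = (v^T^T *m S *m v^T) 0 0).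
  apply: d_quad => j; rewrite lerNl; apply: le_trans (ler_norm _) _.
  by rewrite normrN (ler_term_sumr (F := fun j => `|d j|)).
by rewrite trmxK vS -scalemxAl [RHS]mxE.
Qed.

End RealSymmetric.

Section FiniteImage.
Variables (R : realDomainType) (T : finType) (f : T -> R).

Lemma finite_image_has_ubound : has_ubound [set f t | t in [set: T]].
Proof.
exists (\sum_t `|f t|) => _ [t _ <-].
exact: le_trans (ler_norm _) (ler_term_sumr (F := fun t => `|f t|) _ _).
Qed.

Lemma finite_image_has_lbound : has_lbound [set f t | t in [set: T]].
Proof.
exists (- \sum_t `|f t|) => _ [t _ <-]; rewrite lerNl.
by apply: le_trans (ler_norm _) _; rewrite normrN (ler_term_sumr (F := fun t => `|f t|)).
Qed.

End FiniteImage.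

Section EuclideanNorm.
Variable R : realType.

Section Vectors.
Variable n : nat.
Implicit Types x y : 'cV[R]_n.

Lemma vnorm2E x : vnorm2 x = Num.sqrt ((x^T *m x) 0 0).
Proof. by rewrite trmx_mul_selfE. Qed.

Lemma vnorm2_ge0 x : 0 <= vnorm2 x.
Proof. exact: sqrtr_ge0. Qed.

Lemma sqr_vnorm2 x : vnorm2 x ^+ 2 = (x^T *m x) 0 0.
Proof. by rewrite vnorm2E sqr_sqrtr // trmx_mul_self_ge0. Qed.

Lemma vnorm2_eq0 x : (vnorm2 x == 0) = (x == 0).
Proof.
by rewrite vnorm2E sqrtr_eq0 -trmx_mul_self_eq0 eq_le trmx_mul_self_ge0 andbT.
Qed.

Lemma vnorm2_0 : vnorm2 (0 : 'cV[R]_n) = 0.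
Proof. by apply/eqP; rewrite vnorm2_eq0. Qed.

Lemma vnorm2Z c x : vnorm2 (c *: x) = `|c| * vnorm2 x.
Proof.
rewrite /vnorm2 -sqrtr_sqr -sqrtrM ?sqr_ge0 // mulr_sumr.
by congr Num.sqrt; apply: eq_bigr => i _; rewrite mxE exprMn.
Qed.

Lemma norm_entry_le_vnorm2 x i : `|x i 0| <= vnorm2 x.
Proof.
rewrite -sqrtr_sqr; apply: ler_wsqrtr.
by rewrite (ler_term_sumr (F := fun j => x j 0 ^+ 2)) // => j; exact: sqr_ge0.
Qed.

Lemma vnorm2_le_sum_norm x : vnorm2 x <= \sum_i `|x i 0|.
Proof.
rewrite -[X in _ <= X]ger0_norm ?sumr_ge0 // -sqrtr_sqr; apply: ler_wsqrtr.
rewrite expr2 mulr_suml; apply: ler_sum => i _.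
by rewrite -real_normK ?num_real // expr2 ler_wpM2l //
  (ler_term_sumr (F := fun j => `|x j 0|)).
Qed.

End Vectors.

Section Operators.
Variables p q : nat.
Implicit Types (M : 'M[R]_(p, q)) (x : 'cV[R]_q).

Lemma vnorm2_mulmx_le M x : vnorm2 (M *m x) <= (\sum_i \sum_j `|M i j|) * vnorm2 x.
Proof.
apply: le_trans (vnorm2_le_sum_norm _) _.
rewrite mulr_suml; apply: ler_sum => i _; rewrite mxE mulr_suml.
apply: le_trans (ler_norm_sum _ _ _) _; apply: ler_sum => j _.
by rewrite normrM ler_wpM2l // norm_entry_le_vnorm2.
Qed.

Lemma opnorm2_has_ub M :
  has_ubound [set vnorm2 (M *m x) | x in [set x | vnorm2 x = 1]].
Proof.
exists (\sum_i \sum_j `|M i j|) => _ [x /= x1 <-].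
by have := vnorm2_mulmx_le M x; rewrite x1 mulr1.
Qed.

Lemma opnorm2_ge0 M : 0 <= opnorm2 M.
Proof.
rewrite /opnorm2; set E := [set _ | _ in _].
have [E0|/set0P [e Ee]] := eqVneq E set0; first by rewrite E0 sup0.
apply: le_trans (ub_le_sup (opnorm2_has_ub M) Ee).
by case: Ee => x _ <-; exact: vnorm2_ge0.
Qed.

Lemma opnorm2_le M B : 0 <= B ->
  (forall x, vnorm2 x = 1 -> vnorm2 (M *m x) <= B) -> opnorm2 M <= B.
Proof.
move=> B_ge0 MB; rewrite /opnorm2; set E := [set _ | _ in _].
have [E0|E_neq0] := eqVneq E set0; first by rewrite E0 sup0.
by apply: ge_sup; [exact/set0P | move=> _ [x /= x1 <-]; exact: MB].
Qed.

Lemma vnorm2_mulmx_le_opnorm2 M x : vnorm2 (M *m x) <= opnorm2 M * vnorm2 x.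
Proof.
have [->|x0] := eqVneq x 0.
  by rewrite mulmx0 !vnorm2_0 mulr0.
have nx_gt0 : 0 < vnorm2 x by rewrite lt_def vnorm2_eq0 x0 vnorm2_ge0.
set y := (vnorm2 x)^-1 *: x.
have y1 : vnorm2 y = 1 by rewrite vnorm2Z ger0_norm ?invr_ge0 ?vnorm2_ge0 // mulVf ?gt_eqF.
have := ub_le_sup (opnorm2_has_ub M) (ex_intro2 _ _ y y1 erefl).
rewrite -scalemxAr vnorm2Z ger0_norm ?invr_ge0 ?vnorm2_ge0 // mulrC.
by rewrite ler_pdivrMr // mulrC.
Qed.

End Operators.
End EuclideanNorm.

Lemma sup_finite_image_ge0_le (R : realType) (T : finType) (f : T -> R) B :
  0 <= B -> (forall t, 0 <= f t <= B) -> 0 <= sup [set f t | t in [set: T]] <= B.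
Proof.
move=> B_ge0 fB; set E := [set _ | _ in _].
have [E0|/set0P [e Ee]] := eqVneq E set0; first by rewrite E0 sup0 lexx.
apply/andP; split.
  apply: le_trans (ub_le_sup (finite_image_has_ubound f) Ee).
  by case: Ee => t _ <-; case/andP: (fB t).
by apply: ge_sup; [by exists e | move=> _ [t _ <-]; case/andP: (fB t)].
Qed.

Section JointSpectralRadius.
Variables (R : realType) (m : nat) (T : finType) (A : T -> 'M[R]_m).

Lemma vnorm2_prodA_le r s x : 0 <= r ->
  (forall t y, vnorm2 (A t *m y) <= r * vnorm2 y) ->
  vnorm2 (prodA A s *m x) <= r ^+ size s * vnorm2 x.
Proof.
move=> r_ge0 Ar; rewrite /prodA -[in X in _ <= _ * X](mul1mx x).
elim: s 1%:M => [|t s IHs] B /=; first by rewrite expr0 mul1r.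
apply: le_trans (IHs _) _.
by rewrite exprS -mulrA -mulmxA mulrCA ler_wpM2l ?exprn_ge0.
Qed.

Lemma powR_invn_le (a r : R) k : (0 < k)%N -> 0 <= r -> 0 <= a <= r ^+ k ->
  powR a k%:R^-1 <= r.
Proof.
move=> k_gt0 r_ge0 /andP[a_ge0 ar].
apply: le_trans (ge0_ler_powR _ _ _ ar) _; rewrite ?invr_ge0 ?ler0n ?nnegrE ?exprn_ge0 //.
by rewrite -powR_mulrn // -powRrM mulfV ?powRr1 // pnatr_eq0 -lt0n.
Qed.

Lemma jsr_le r : 0 <= r ->
  (forall k, (0 < k)%N ->
     powR (sup [set opnorm2 (prodA A (fgraph f)) | f in [set: {ffun 'I_k -> T}]])
          k%:R^-1 <= r) ->
  jsr A <= r.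
Proof.
move=> r_ge0 ub; rewrite /jsr; set u := (fun k : nat => _).
have [u_cvg|u_ncvg] := pselect (cvgn u).
  by apply: limr_le => //; exists 1%N => // k /= k_gt0; exact: ub.
(* A divergent sequence has limit [point], which is [0] in [R]. *)
by rewrite dvgP.
Qed.

Lemma jsr_le_uniform r : 0 <= r ->
  (forall t y, vnorm2 (A t *m y) <= r * vnorm2 y) -> jsr A <= r.
Proof.
move=> r_ge0 Ar; apply: jsr_le => // k k_gt0; apply: powR_invn_le => //.
apply: sup_finite_image_ge0_le => [|f]; first exact: exprn_ge0.
rewrite opnorm2_ge0 opnorm2_le ?exprn_ge0 // => x x1.
have := vnorm2_prodA_le (fgraph f) x r_ge0 Ar.
by rewrite x1 mulr1 size_tuple [in X in _ <= X -> _]card_ord.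
Qed.

End JointSpectralRadius.

Section DampedStep.
Variables (R : realType) (m : nat).
Implicit Types (M S : 'M[R]_m) (x y : 'cV[R]_m).

Lemma lambda_min_quad_le S x : S^T = S ->
  lambda_min S * (x^T *m x) 0 0 <= (x^T *m S *m x) 0 0.
Proof.
move=> S_sym; have [d d_eig d_quad] := symmx_spectral S_sym.
by apply: d_quad => j; apply: (ge_inf (symmx_eigenvalue_lbound S_sym)); exact: d_eig.
Qed.

Lemma quad_sym_part M x :
  (x^T *m (2^-1 *: (M + M^T)) *m x) 0 0 = (x^T *m M *m x) 0 0.
Proof.
have tr_quad : (x^T *m M^T *m x) 0 0 = (x^T *m M *m x) 0 0.
  have -> : x^T *m M^T *m x = (x^T *m M *m x)^T by rewrite !trmx_mul trmxK mulmxA.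
  by rewrite [LHS]mxE.
by rewrite -scalemxAr -scalemxAl mulmxDr mulmxDl mxE [in X in _ * X]mxE tr_quad; field.
Qed.

Lemma lambda_min_sym_part_quad_le M x :
  lambda_min (2^-1 *: (M + M^T)) * (x^T *m x) 0 0 <= (x^T *m M *m x) 0 0.
Proof.
rewrite -quad_sym_part; apply: lambda_min_quad_le.
by rewrite linearZ /= linearD /= trmxK addrC.
Qed.

Lemma vnorm2_damped_step_le M (a b c L : R) y :
  0 <= a -> 0 <= b -> c <= lambda_min (2^-1 *: (M + M^T)) -> opnorm2 M <= L ->
  vnorm2 ((b%:M - a *: M) *m y) <=
  Num.sqrt (b ^+ 2 - 2 * a * b * c + a ^+ 2 * L ^+ 2) * vnorm2 y.
Proof.
move=> a_ge0 b_ge0 c_le L_ge.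
rewrite !vnorm2E mulrC -sqrtrM ?trmx_mul_self_ge0 // mulrC; apply: ler_wsqrtr.
rewrite mulmxBl mul_scalar_mx -scalemxAl trmx_mul_self_lincomb.
have y2_ge0 := trmx_mul_self_ge0 y.
have quad : c * (y^T *m y) 0 0 <= (y^T *m (M *m y)) 0 0.
  rewrite mulmxA; apply: le_trans (lambda_min_sym_part_quad_le M y).
  exact: ler_wpM2r.
have norm : ((M *m y)^T *m (M *m y)) 0 0 <= L ^+ 2 * (y^T *m y) 0 0.
  rewrite -!sqr_vnorm2 -exprMn ler_pXn2r ?nnegrE ?vnorm2_ge0 //.
    apply: le_trans (vnorm2_mulmx_le_opnorm2 M y) _.
    by rewrite ler_wpM2r ?vnorm2_ge0.
  by rewrite mulr_ge0 ?vnorm2_ge0 // (le_trans (opnorm2_ge0 M) L_ge).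
have ab_ge0 : 0 <= 2 * b * a by rewrite !mulr_ge0.
have := ler_wpM2l ab_ge0 quad; have := ler_wpM2l (sqr_ge0 a) norm.
lra.
Qed.

End DampedStep.

Lemma sqrt_step_factor_lt1 (R : rcfType) (a k Q : R) :
  0 < a -> 0 < k -> a < 2 * k / Q -> Num.sqrt (1 - 2 * a * k + a ^+ 2 * Q) < 1.
Proof.
move=> a_gt0 k_gt0 a_lt.
(* If Q <= 0 then 2k/Q <= 0, also for Q = 0 where the quotient is 0. *)
have Q_gt0 : 0 < Q.
  rewrite ltNge; apply/negP => Q_le0.
  have : 2 * k / Q <= 0 by rewrite mulr_ge0_le0 ?invr_le0 // mulr_ge0 // ltW.
  lra.
have aQ : a * (a * Q) < a * (2 * k) by rewrite ltr_pM2l // -ltr_pdivlMr.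
rewrite -[X in _ < X]sqrtr1 ltr_sqrt ?ltr01 // -subr_gt0.
have -> : 1 - (1 - 2 * a * k + a ^+ 2 * Q) = a * (2 * k) - a * (a * Q) by ring.
by rewrite subr_gt0.
Qed.

Section MDP.
Variables (R : realType) (nS nA m : nat).
Variables (Phi : 'M[R]_(nS * nA, m)) (d : 'cV[R]_(nS * nA)).
Variables (P : 'M[R]_(nS * nA, nS)) (gamma : R).

Local Notation M := (Mpi Phi d P gamma).

Lemma c_Phi_le pi : c_Phi Phi d P gamma <= lambda_min (2^-1 *: (M pi + (M pi)^T)).
Proof. by apply: ge_inf; [exact: finite_image_has_lbound | exists pi]. Qed.

Lemma L_Phi_ge pi : opnorm2 (M pi) <= L_Phi Phi d P gamma.
Proof. by apply: ub_le_sup; [exact: finite_image_has_ubound | exists pi]. Qed.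

Lemma AetaE alpha eta pi :
  Aeta Phi d P gamma alpha eta pi = (1 - alpha * eta)%:M - alpha *: M pi.
Proof.
by rewrite /Aeta scalerDr scale_scalar_mx opprD addrA addrAC (raddfB (@scalar_mx R m)).
Qed.

Lemma rho_dir_le alpha eta : 0 <= alpha -> alpha * eta <= 1 ->
  rho_dir Phi d P gamma alpha eta <=
  Num.sqrt ((1 - alpha * eta) ^+ 2
            - 2 * alpha * (1 - alpha * eta) * c_Phi Phi d P gamma
            + alpha ^+ 2 * L_Phi Phi d P gamma ^+ 2).
Proof.
move=> alpha_ge0 alpha_eta_le1.
apply: jsr_le_uniform => [|pi y]; first exact: sqrtr_ge0.
rewrite AetaE; apply: vnorm2_damped_step_le => //; last exact: L_Phi_ge.
  by rewrite subr_ge0.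
exact: c_Phi_le.
Qed.

End MDP.

Theorem proposition6 (R : realType) (nS nA m : nat)
  (P : 'M[R]_(nS * nA, nS)) (Phi : 'M[R]_(nS * nA, m)) (d : 'cV[R]_(nS * nA))
  (gamma alpha eta : R) :
  (0 < nS)%N -> (0 < nA)%N ->
  (forall i j, 0 <= P i j) -> (forall i, \sum_j P i j = 1) ->
  \rank Phi = m ->
  (forall i, 0 < d i 0) -> \sum_i d i 0 = 1 ->
  0 < gamma < 1 -> 0 < alpha < 1 -> 0 <= eta ->
  0 <= alpha * eta <= 1 ->
  let c := c_Phi Phi d P gamma in
  let L := L_Phi Phi d P gamma in
  let rho := rho_dir Phi d P gamma alpha eta in
  [/\ rho <= Num.sqrt ((1 - alpha * eta) ^+ 2 - 2 * alpha * (1 - alpha * eta) * c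
                       + alpha ^+ 2 * L ^+ 2),
      rho <= Num.sqrt (1 - 2 * alpha * (c + eta)
                       + alpha ^+ 2 * (L ^+ 2 + 2 * c * eta + eta ^+ 2))
    & (0 < c + eta -> alpha < 2 * (c + eta) / (L ^+ 2 + 2 * c * eta + eta ^+ 2) ->
       rho < 1)].
Proof.
move=> _ _ _ _ _ _ _ _ /andP[alpha_gt0 _] _ /andP[_ alpha_eta_le1] c L rho.
have rho_le : rho <= Num.sqrt ((1 - alpha * eta) ^+ 2
                  - 2 * alpha * (1 - alpha * eta) * c + alpha ^+ 2 * L ^+ 2).
  exact: rho_dir_le (ltW alpha_gt0) alpha_eta_le1.
have factorE : (1 - alpha * eta) ^+ 2 - 2 * alpha * (1 - alpha * eta) * c
                 + alpha ^+ 2 * L ^+ 2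
               = 1 - 2 * alpha * (c + eta) + alpha ^+ 2 * (L ^+ 2 + 2 * c * eta + eta ^+ 2).
  by ring.
split => //; first by rewrite -factorE.
move=> c_eta_gt0 alpha_lt; apply: le_lt_trans rho_le _.
by rewrite factorE sqrt_step_factor_lt1.
Qed.
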